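(* Let $n\geq3$, let $S_n=K_{1,n-1}$ be the star with centre $v$, and let $c_0$ be a finite chip configuration on $S_n$ with resulting configurations $(c_t)_{t\ge0}$. Let $\ell_M$ be a leaf whose value $c_0(\ell_M)$ is maximum among leaves and $\ell_m$ a leaf whose value $c_0(\ell_m)$ is minimum among leaves, and let $d_t=\max_{x,y\in V(S_n)\setminus\{v\}}|c_t(x)-c_t(y)|$. Then: 1. For all $t\geq0$, $d_t=c_t(\ell_M)-c_t(\ell_m)$. 2. If $c_t(\ell_m)\leq c_t(v)\leq c_t(\ell_M)$ and at least one of these inequalities is strict, then $d_{t+1}<d_t$. 3. If $c_t(v)<c_t(\ell_m)$, then there exists $r\geq t$ such that $c_r(v)\geq c_r(\ell_m)$. 4. If $c_t(v)<c_t(\ell_m)$ and $c_{t+1}(v)>c_{t+1}(\ell_M)$, then $c_t$ has property plus. 5. If $d_t=0$, then there exists $r\geq t$ such that $c_r$ has property plus.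
   Context: Diffusion process: for a vertex $u$, $\Delta_t^-(u)=|\{w\in N(u): c_t(u)>c_t(w)\}|$, $\Delta_t^+(u)=|\{w\in N(u): c_t(u)<c_t(w)\}|$, $\Delta_t(u)=\Delta_t^+(u)-\Delta_t^-(u)$, and $c_{t+1}(u)=c_t(u)+\Delta_t(u)$ for all $u$ simultaneously. A configuration $c_i$ has property plus if (1) $c_i(x)+\Delta_i(x)>c_i(y)+\Delta_i(y)$ for every edge $xy$ with $c_i(x)<c_i(y)$, and (2) $c_i(x)+\Delta_i(x)=c_i(y)+\Delta_i(y)$ for every edge $xy$ with $c_i(x)=c_i(y)$. *)

From mathcomp Require Import all_boot all_order all_algebra.
Set Implicit Arguments. Unset Strict Implicit. Unset Printing Implicit Defensive.
Import Order.TTheory GRing.Theory Num.Theory.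
Local Open Scope ring_scope.

(* A graph is a relation e on a finite vertex type (symmetric, irreflexive for
   the graphs considered).  A chip configuration is a map V -> int. *)
Section Diffusion.
Variable T : finType.
Variable e : rel T.

Definition dminus (c : T -> int) (u : T) : nat := #|[pred w | e u w && (c w < c u)]|.
Definition dplus (c : T -> int) (u : T) : nat := #|[pred w | e u w && (c u < c w)]|.
Definition Delta (c : T -> int) (u : T) : int := (dplus c u)%:Z - (dminus c u)%:Z.

Definition step (c : T -> int) : T -> int := fun u => c u + Delta c u.

Definition conf (c0 : T -> int) (t : nat) : T -> int := iter t step c0.

Definition prop_plus (c : T -> int) : Prop :=
  (forall x y, e x y -> c x < c y -> c x + Delta c x > c y + Delta c y) /\
  (forall x y, e x y -> c x = c y -> c x + Delta c x = c y + Delta c y).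
End Diffusion.

Definition star_edge (n : nat) (v : 'I_n) : rel 'I_n :=
  fun x y => (x != y) && ((x == v) || (y == v)).

Definition leaf_diam (n : nat) (v : 'I_n) (c : 'I_n -> int) : nat :=
  \max_(x | x != v) \max_(y | y != v) `|c x - c y|%N.

(* On the star every leaf sees only the centre, so a leaf moves one chip
   towards the centre's value (or stays if equal).  Hence the order among the
   leaves is preserved: the extremal leaves stay extremal and the leaf
   diameter is the gap between them; it shrinks as soon as the centre lies
   between them and differs from one of them.  While the centre is below all
   leaves it does not decrease while every leaf loses a chip, so it catches up
   with the minimal leaf.  When all leaves are equal they move in lockstep and
   the gap to the centre decreases until the step either equalises or
   reverses the order on every edge, which is property plus. *)

From mathcomp Require Import all_boot all_order all_algebra zify.
Set Implicit Arguments. Unset Strict Implicit. Unset Printing Implicit Defensive.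
Import Order.TTheory GRing.Theory Num.Theory.
Local Open Scope ring_scope.

Section Star.

Variables (n : nat) (v : 'I_n).

Local Notation stp := (step (star_edge v)).

Lemma card_star_leaf_nbr (x : 'I_n) (P : pred 'I_n) : x != v ->
  #|[pred w | star_edge v x w && P w]| = P v.
Proof.
move=> xv; rewrite (eq_card (B := [pred w | (w == v) && P w])); last first.
  move=> w; rewrite !inE /star_edge /=.
  by case: (eqVneq w v) => [->|wv] /=; rewrite ?xv ?(negbTE xv) ?andbF.
case Pv: (P v).
  rewrite (eq_card (B := pred1 v)) ?card1 // => w; rewrite !inE.
  by case: (eqVneq w v) => [->|].
by rewrite eq_card0 // => w; rewrite !inE; case: (eqVneq w v) => [->|]; rewrite ?Pv.
Qed.

Lemma step_leaf (c : 'I_n -> int) (x : 'I_n) : x != v ->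
  stp c x = c x + (if c x < c v then 1 else if c v < c x then -1 else 0).
Proof.
move=> xv; rewrite /step /Delta /dplus /dminus !card_star_leaf_nbr //.
by case: ltgtP.
Qed.

Lemma step_centre_ge (c : 'I_n -> int) :
  (forall x, x != v -> c v <= c x) -> c v <= stp c v.
Proof.
move=> above; have dminus0 : dminus (star_edge v) c v = 0%N.
  rewrite /dminus eq_card0 // => w; rewrite !inE /star_edge eqxx /= andbT.
  by case: (eqVneq v w) => [<-|wv] //=; apply/negbTE; rewrite -leNgt above // eq_sym.
by rewrite /step /Delta dminus0 subr0 lerDl.
Qed.

Lemma step_centre_le (c : 'I_n -> int) :
  (forall x, x != v -> c x <= c v) -> stp c v <= c v.
Proof.
move=> below; have dplus0 : dplus (star_edge v) c v = 0%N.
  rewrite /dplus eq_card0 // => w; rewrite !inE /star_edge eqxx /= andbT.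
  by case: (eqVneq v w) => [<-|wv] //=; apply/negbTE; rewrite -leNgt below // eq_sym.
by rewrite /step /Delta dplus0 sub0r gerDl oppr_le0.
Qed.

Lemma step_leaf_mono (c : 'I_n -> int) (x y : 'I_n) : x != v -> y != v ->
  c x <= c y -> stp c x <= stp c y.
Proof. by move=> xv yv le_xy; rewrite !step_leaf //; do 2 case: ltgtP => ?; lia. Qed.

Lemma leaf_diamE (c : 'I_n -> int) (lm lM : 'I_n) : lm != v -> lM != v ->
  (forall x, x != v -> c lm <= c x <= c lM) ->
  leaf_diam v c = `|c lM - c lm|%N.
Proof.
move=> lmv lMv bounds; apply/eqP; rewrite eqn_leq; apply/andP; split.
  apply/bigmax_leqP => x xv; apply/bigmax_leqP => y yv.
  by move: (bounds x xv) (bounds y yv); lia.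
by apply: (bigop.bigmax_sup lM) => //; apply: (bigop.bigmax_sup lm).
Qed.

Lemma step_leaf_gap_lt (c : 'I_n -> int) (lm lM : 'I_n) : lm != v -> lM != v ->
  c lm <= c v -> c v <= c lM -> c lm < c v \/ c v < c lM ->
  stp c lM - stp c lm < c lM - c lm.
Proof.
move=> lmv lMv lm_v v_lM strict; rewrite !step_leaf //.
by case: (ltgtP (c lM) (c v)) => ?; case: (ltgtP (c lm) (c v)) => ?; lia.
Qed.

Lemma prop_plus_star (c : 'I_n -> int) :
  (forall x, x != v ->
    [/\ c x < c v -> stp c v < stp c x,
        c v < c x -> stp c x < stp c v
      & c x = c v -> stp c x = stp c v]) ->
  prop_plus (star_edge v) c.
Proof.
rewrite /step => edge_ok.
have leaf_end x y : star_edge v x y -> (x = v /\ y != v) \/ (y = v /\ x != v).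
  by case/andP=> xy /orP[/eqP xv|/eqP yv]; [left|right]; subst; rewrite // eq_sym.
by split=> x y /leaf_end[[-> /edge_ok[? ? ?]]|[-> /edge_ok[? ? ?]]]; lia.
Qed.

Lemma prop_plus_star_up (c : 'I_n -> int) :
  (forall x, x != v -> c v < c x /\ stp c x < stp c v) ->
  prop_plus (star_edge v) c.
Proof. by move=> up; apply: prop_plus_star => x /up[]; split; lia. Qed.

Lemma prop_plus_star_down (c : 'I_n -> int) :
  (forall x, x != v -> c x < c v /\ stp c v < stp c x) ->
  prop_plus (star_edge v) c.
Proof. by move=> down; apply: prop_plus_star => x /down[]; split; lia. Qed.

Lemma prop_plus_star_flat (c : 'I_n -> int) :
  (forall x, x != v -> c x = c v) -> prop_plus (star_edge v) c.
Proof.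
move=> flat; have stp_v : stp c v = c v.
  by apply/eqP; rewrite eq_le step_centre_le ?step_centre_ge // => x /flat ->.
apply: prop_plus_star => x xv; rewrite stp_v step_leaf // flat // ltxx.
by split; lia.
Qed.

Lemma flat_leaves_step (c : 'I_n -> int) (a : int) :
  (forall x, x != v -> c x = a) ->
  prop_plus (star_edge v) c \/
  exists a', (forall x, x != v -> stp c x = a') /\ (`|a' - stp c v| < `|a - c v|)%N.
Proof.
move=> flat; case: (ltgtP (c v) a) => [va|av|va]; last first.
- by left; apply: prop_plus_star_flat => x /flat ->.
- have stp_v : stp c v <= c v by apply: step_centre_le => x /flat ->; apply: ltW.
  have stp_x x : x != v -> stp c x = a + 1.
    by move=> xv; rewrite step_leaf // flat // av.
  case: (ltP (stp c v) (a + 1)) => [vlt|vge].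
    by left; apply: prop_plus_star_down => x xv; rewrite (stp_x x xv) (flat x xv).
  by right; exists (a + 1); split=> //; lia.
- have stp_v : c v <= stp c v by apply: step_centre_ge => x /flat ->; apply: ltW.
  have stp_x x : x != v -> stp c x = a - 1.
    by move=> xv; rewrite step_leaf // flat // ltNge (ltW va) va.
  case: (ltP (a - 1) (stp c v)) => [vgt|vle].
    by left; apply: prop_plus_star_up => x xv; rewrite (stp_x x xv) (flat x xv).
  by right; exists (a - 1); split=> //; lia.
Qed.

Section Orbit.

Variables (c0 : 'I_n -> int) (lm lM : 'I_n).
Hypotheses (lmv : lm != v) (lMv : lM != v).
Hypotheses (lm_min : forall x, x != v -> c0 lm <= c0 x)
           (lM_max : forall x, x != v -> c0 x <= c0 lM).

Local Notation c := (conf (star_edge v) c0).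

Lemma confS t : c t.+1 = stp (c t).
Proof. by []. Qed.

Lemma conf_leaf_bounds t {x} : x != v -> c t lm <= c t x <= c t lM.
Proof.
elim: t => [|t IH] in x * => xv; first by rewrite lm_min ?lM_max.
by case/andP: (IH x xv) => ? ?; rewrite !step_leaf_mono.
Qed.

Lemma leaf_diam_conf t : (leaf_diam v (c t))%:Z = c t lM - c t lm.
Proof.
rewrite (leaf_diamE lmv lMv (@conf_leaf_bounds t)).
by move: (conf_leaf_bounds t lMv); lia.
Qed.

Lemma leaf_diam_conf_decr t : c t lm <= c t v -> c t v <= c t lM ->
  (c t lm < c t v \/ c t v < c t lM) ->
  (leaf_diam v (c t.+1) < leaf_diam v (c t))%N.
Proof.
by rewrite -ltz_nat !leaf_diam_conf; apply: step_leaf_gap_lt.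
Qed.

Lemma conf_centre_reaches_min t : exists r, (t <= r)%N /\ c r lm <= c r v.
Proof.
have [k gap] : exists k : nat, c t lm - c t v <= k%:Z.
  by exists `|c t lm - c t v|%N; lia.
elim: k t gap => [|k IH] t gap; first by exists t; split=> //; lia.
case: (leP (c t lm) (c t v)) => [|vlm]; first by exists t.
have stp_v : c t v <= c t.+1 v.
  by rewrite confS; apply: step_centre_ge => x xv; move: (conf_leaf_bounds t xv); lia.
have stp_lm : c t.+1 lm = c t lm - 1.
  by rewrite confS step_leaf // ltNge (ltW vlm) vlm.
have [|r [tr reached]] := IH t.+1; first by lia.
by exists r; split=> //; apply: ltnW.
Qed.

Lemma prop_plus_conf_overtake t : c t v < c t lm -> c t.+1 lM < c t.+1 v ->
  prop_plus (star_edge v) (c t).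
Proof.
move=> below above; apply: prop_plus_star_up => x xv.
by move: (conf_leaf_bounds t xv) (conf_leaf_bounds t.+1 xv) above; rewrite !confS; lia.
Qed.

Lemma prop_plus_conf_flat t : leaf_diam v (c t) = 0%N ->
  exists r, (t <= r)%N /\ prop_plus (star_edge v) (c r).
Proof.
move=> d0; have flat x : x != v -> c t x = c t lm.
  by move=> xv; move: (leaf_diam_conf t) (conf_leaf_bounds t xv); rewrite d0; lia.
clear d0; move: (c t lm) flat => a; have [k gap] := ubnP `|a - c t v|%N.
elim: k t a gap => [//|k IH] t a gap flat.
case: (flat_leaves_step flat) => [pp|[a' [flat' gap']]]; first by exists t.
have [|r [tr pp]] := IH t.+1 a' _ flat'; first by rewrite confS; lia.
by exists r; split=> //; apply: ltnW.
Qed.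

End Orbit.

End Star.

Theorem lemma18 (n : nat) (hn : (3 <= n)%N) (v : 'I_n) (c0 : 'I_n -> int)
    (lM lm : 'I_n)
    (hlM : lM != v) (hMmax : forall x, x != v -> c0 x <= c0 lM)
    (hlm : lm != v) (hmmin : forall x, x != v -> c0 lm <= c0 x) :
  let c := conf (star_edge v) c0 in
  let d := fun t => leaf_diam v (c t) in
  (* 1 *) (forall t : nat, (d t)%:Z = c t lM - c t lm) /\
  (* 2 *) (forall t : nat, c t lm <= c t v -> c t v <= c t lM ->
             (c t lm < c t v \/ c t v < c t lM) -> (d t.+1 < d t)%N) /\
  (* 3 *) (forall t : nat, c t v < c t lm ->
             exists r : nat, (t <= r)%N /\ c r lm <= c r v) /\
  (* 4 *) (forall t : nat, c t v < c t lm -> c t.+1 lM < c t.+1 v ->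
             prop_plus (star_edge v) (c t)) /\
  (* 5 *) (forall t : nat, d t = 0%N ->
             exists r : nat, (t <= r)%N /\ prop_plus (star_edge v) (c r)).
Proof.
move=> c d.
split; first exact: (leaf_diam_conf hlm hlM hmmin hMmax).
split; first exact: (leaf_diam_conf_decr hlm hlM hmmin hMmax).
split; first by move=> t _; exact: (conf_centre_reaches_min hlm hlM hmmin hMmax).
split; first exact: (prop_plus_conf_overtake hlm hlM hmmin hMmax).
exact: (prop_plus_conf_flat hlm hlM hmmin hMmax).
Qed.
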